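(* Let $h,k$ be integers with $k>0$, $\gcd(h,k)=1$ and $h+k$ odd. Then $$B_{1}(h,k)=(1-h)\bigl(4s(h,2k)+4s(2h,k)-10s(h,k)\bigr).$$
   Context: $[x]$ denotes the greatest integer $\le x$, and $((x))=x-[x]-\tfrac12$ if $x\notin\mathbb{Z}$, $((x))=0$ if $x\in\mathbb{Z}$. For integers $a,b$ with $b>0$: the Dedekind sum is $s(a,b)=\sum_{j=1}^{b-1}\left(\left(\frac{aj}{b}\right)\right)\left(\left(\frac{j}{b}\right)\right)$, and (for $\gcd(a,b)=1$) $$B_{1}(a,b)=\sum_{j=1}^{b-1}(-1)^{j+\left[\frac{aj}{b}\right]}\left[\frac{aj}{b}\right].$$ *)

From mathcomp Require Import all_boot all_order all_algebra.
Set Implicit Arguments. Unset Strict Implicit. Unset Printing Implicit Defensive.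
Import Order.TTheory GRing.Theory Num.Theory.
Local Open Scope ring_scope.

Definition sawtooth (x : rat) : rat :=
  if x \is a Num.int then 0 else x - (Num.floor x)%:~R - 1 / 2.

Definition dedekind_sum (a b : int) : rat :=
  \sum_(1 <= j < `|b|%N) sawtooth ((a * j%:Z)%:~R / b%:~R) * sawtooth ((j%:Z)%:~R / b%:~R).

Definition B1 (a b : int) : rat :=
  \sum_(1 <= j < `|b|%N)
     let f := Num.floor ((a * j%:Z)%:~R / b%:~R : rat) in
     (-1) ^ (j%:Z + f) * f%:~R.

From mathcomp Require Import all_boot all_order all_algebra.
From mathcomp Require Import ring lra zify.
Import Order.TTheory GRing.Theory Num.Theory.
Local Open Scope ring_scope.

(* Put a = h + k, which is odd, and P = sum_(0 <= j < k) ((aj/2k)).  Pairing j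
   with k - j in B_1 gives 2 B_1(h,k) = (h - 1) sum_(0 < j < k) (-1)^(j + [hj/k]);
   as (-1)^[x] = 2((x)) - 4((x/2)) for non-integral x and the ((aj/k)) sum to 0,
   this sign sum is -4P.  On the other side, Knopp's identity
   s(2h,k) + s(h,2k) + s(a,2k) = 3 s(h,k), together with s(a,k) = s(h,k) and
   s(a,2k) = s(a,k)/2 - P/2 for odd a, gives
   4 s(h,2k) + 4 s(2h,k) - 10 s(h,k) = 2P. *)

Lemma floorN_notint (R : archiRealDomainType) (x : R) :
  x \isn't a Num.int -> Num.floor (- x) = - Num.floor x - 1.
Proof. by move=> xNZ; rewrite floorNceil opprK ceil_floor xNZ opprD. Qed.

Lemma expN1zE (R : numDomainType) (z : int) : (-1 : R) ^ z = (-1) ^+ odd `|z|%N.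
Proof. by rewrite expN1r signr_odd. Qed.

Lemma sawtooth_intr (m : int) : sawtooth m%:~R = 0.
Proof. by rewrite /sawtooth intr_int. Qed.

Lemma sawtooth_notint (x : rat) :
  x \isn't a Num.int -> sawtooth x = x - (Num.floor x)%:~R - 1 / 2.
Proof. by rewrite /sawtooth => /negbTE ->. Qed.

Lemma sawtoothE (x : rat) (m : int) :
  m%:~R < x < m%:~R + 1 -> sawtooth x = x - m%:~R - 1 / 2.
Proof.
move=> /andP[mx xm1]; have fx : Num.floor x = m.
  by apply: floor_def; rewrite intrD ltW.
by rewrite /sawtooth intrEfloor fx lt_eqF.
Qed.

Lemma sawtoothDintr (x : rat) (m : int) : sawtooth (x + m%:~R) = sawtooth x.
Proof.
rewrite /sawtooth rpredDr ?intr_int //; case: ifP => // _.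
by rewrite floorDrz ?intr_int // intrKfloor intrD; ring.
Qed.

Lemma sawtooth_eqDintr {x y : rat} (m : int) : x = y + m%:~R -> sawtooth x = sawtooth y.
Proof. by move=> ->; apply: sawtoothDintr. Qed.

Lemma sawtoothN (x : rat) : sawtooth (- x) = - sawtooth x.
Proof.
have [xZ|xNZ] := boolP (x \is a Num.int); first by rewrite /sawtooth rpredN xZ oppr0.
rewrite !sawtooth_notint ?rpredN // floorN_notint // intrB intrN mulr1z; lra.
Qed.

Lemma sawtooth_double (x : rat) : sawtooth (2 * x) = sawtooth x + sawtooth (x + 1 / 2).
Proof.
have /andP[nx xn1] := floor_itv x; rewrite intrD mulr1z in xn1.
set n := Num.floor x in nx xn1.
have n2 : ((2 * n)%:~R : rat) = 2 * n%:~R by rewrite intrM.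
have [->|x_neq] := eqVneq x n%:~R.
  rewrite -n2 !sawtooth_intr (sawtoothE (n%:~R + 1 / 2) n); first lra.
  by apply/andP; split; lra.
have {x_neq} nx : n%:~R < x by rewrite lt_neqAle eq_sym x_neq.
rewrite (sawtoothE x n); last by apply/andP; split.
have [d_lt|d_gt|d_eq] := ltrgtP (x - n%:~R) (1 / 2).
- rewrite (sawtoothE (2 * x) (2 * n)) ?(sawtoothE (x + 1 / 2) n); try (apply/andP; split); lra.
- rewrite (sawtoothE (2 * x) (2 * n + 1)) ?(sawtoothE (x + 1 / 2) (n + 1)) ?intrD ?n2;
    try (apply/andP; split); lra.
- have -> : 2 * x = (2 * n + 1)%:~R by rewrite intrD n2; lra.
  have -> : x + 1 / 2 = (n + 1)%:~R by rewrite intrD; lra.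
  rewrite !sawtooth_intr; lra.
Qed.

Lemma expN1_floor (x : rat) :
  x \isn't a Num.int -> (-1) ^ Num.floor x = 2 * sawtooth x - 4 * sawtooth (x / 2).
Proof.
move=> xNZ; have x2NZ : x / 2 \isn't a Num.int.
  by apply: contra xNZ => x2Z; rewrite -[x](divfK (_ : 2 != 0)) // rpredM.
rewrite !sawtooth_notint //.
have /andP[q_le q_gt] := floor_itv (x / 2); rewrite intrD mulr1z in q_gt.
set n := Num.floor x; set q := Num.floor (x / 2) in q_le q_gt *.
have n_ge : 2 * q <= n by rewrite floor_ge_int intrM; lra.
have n_lt : n < 2 * q + 2 by rewrite floor_lt_int intrD intrM; lra.
have [->|->] : n = 2 * q \/ n = 2 * q + 1 by lia.
- rewrite expN1zE (_ : odd _ = false); last by lia.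
  rewrite intrM; lra.
- rewrite expN1zE (_ : odd _ = true); last by lia.
  rewrite intrD intrM; lra.
Qed.

Lemma sum_nat_double_halves (R : nmodType) (F : nat -> R) (n : nat) :
  \sum_(0 <= j < 2 * n) F j = \sum_(0 <= i < n) (F i + F (i + n)%N).
Proof.
rewrite big_split /= (@big_cat_nat _ _ _ n) //=; last by rewrite leq_pmull.
congr (_ + _); rewrite -{1}[n]add0n big_addn (_ : (2 * n - n = n)%N) //; lia.
Qed.

Lemma sum_nat_double_parity (R : nmodType) (F : nat -> R) (n : nat) :
  \sum_(0 <= j < 2 * n) F j = \sum_(0 <= i < n) (F (2 * i)%N + F (2 * i).+1).
Proof.
elim: n => [|n IHn]; first by rewrite !big_geq.
by rewrite mulnS !big_nat_recr //= -IHn addrA.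
Qed.

Definition saw (a : int) (n j : nat) : rat := sawtooth (a%:~R * j%:R / n%:R).
Definition flr (a : int) (n j : nat) : int := Num.floor (a%:~R * j%:R / n%:R : rat).
Definition dsum (a : int) (n : nat) : rat := \sum_(0 <= j < n) saw a n j * saw 1 n j.

Lemma saw0 (a : int) (n : nat) : saw a n 0 = 0.
Proof. by rewrite /saw mulr0 mul0r -[0]/(0%:~R) sawtooth_intr. Qed.

Lemma sawMn (a : int) (c n j : nat) : (0 < c)%N -> saw a (c * n) (c * j) = saw a n j.
Proof.
move=> c_gt0; rewrite /saw !natrM mulrCA -mulf_div divff ?mul1r //.
by rewrite pnatr_eq0 -lt0n.
Qed.

Lemma sawMl (a : int) (c n j : nat) : saw (c%:R * a) n j = saw a n (c * j).
Proof. by rewrite /saw intrM natz natrM mulrCA mulrA. Qed.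

Lemma saw_double (a : int) (n j : nat) :
  saw a n j = saw a (2 * n) j + sawtooth (a%:~R * j%:R / (2 * n)%N%:R + 1 / 2).
Proof.
rewrite /saw -sawtooth_double; congr sawtooth.
by rewrite natrM invfM mulrCA [2 * _]mulrA divff ?mul1r.
Qed.

Lemma dedekind_sumE (a : int) (n : nat) : dedekind_sum a n%:Z = dsum a n.
Proof.
rewrite /dedekind_sum /dsum; case: n => [|n]; first by rewrite !big_geq.
rewrite [RHS](big_ltn (ltn0Sn n)) saw0 mul0r add0r; apply: eq_bigr => j _.
by rewrite /saw intrM mul1r.
Qed.

Section Modulus.

Context {n : nat}.
Hypothesis n_gt0 : (0 < n)%N.

Let n_neq0 : (n%:R : rat) != 0. Proof. by rewrite pnatr_eq0 -lt0n. Qed.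

Lemma sawDn (a : int) (j : nat) : saw a n (j + n) = saw a n j.
Proof. by rewrite /saw; apply: (sawtooth_eqDintr a); rewrite natrD; field. Qed.

Lemma sawDz (a : int) (j : nat) : saw (a + n%:Z) n j = saw a n j.
Proof. by rewrite /saw; apply: (sawtooth_eqDintr j); rewrite intrD; field. Qed.

Lemma saw1E (j : nat) : (0 < j < n)%N -> saw 1 n j = j%:R / n%:R - 1 / 2.
Proof.
move=> /andP[j_gt0 j_lt_n]; rewrite /saw mulr1z mul1r (sawtoothE _ 0) mulr0z ?subr0 ?add0r //.
by rewrite divr_gt0 ?ltr0n ?ltr_pdivrMr ?ltr0n // mul1r ltr_nat.
Qed.

Lemma sum_saw (a : int) : \sum_(0 <= j < n) saw a n j = 0.
Proof.
rewrite (big_ltn n_gt0) saw0 add0r.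
set S := \sum_(1 <= j < n) _; suff : S = - S by lra.
rewrite {1}/S big_nat_rev -sumrN; apply: eq_big_nat => j /andP[_ j_lt_n].
rewrite add1n subSS /saw -sawtoothN; apply: (sawtooth_eqDintr a).
by rewrite natrB 1?ltnW //; field.
Qed.

Lemma dsumE (a : int) : dsum a n = \sum_(0 <= j < n) j%:R / n%:R * saw a n j.
Proof.
have -> : dsum a n = \sum_(0 <= j < n) (j%:R / n%:R * saw a n j - 1 / 2 * saw a n j).
  apply: eq_big_nat => -[_|j /andP[_ j_lt_n]]; first by rewrite !saw0; ring.
  by rewrite saw1E //; ring.
by rewrite sumrB -mulr_sumr sum_saw mulr0 subr0.
Qed.

Lemma dsumDz (a : int) : dsum (a + n%:Z) n = dsum a n.
Proof. by apply: eq_bigr => j _; rewrite sawDz. Qed.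

Lemma saw_halfD (a : int) (j : nat) : odd `|a|%N ->
  saw a (2 * n) j + saw a (2 * n) (j + n) = saw a n j.
Proof.
move=> a_odd; have [q ->] : exists q : int, a = 2 * q + 1.
  by exists ((a - 1) %/ 2)%Z; lia.
rewrite [RHS]saw_double; congr (_ + _); rewrite /saw; apply: (sawtooth_eqDintr q).
by rewrite natrD natrM intrD intrM; field.
Qed.

Lemma sum_saw_saw1_double (a : int) :
  \sum_(0 <= j < 2 * n) saw a n j * saw 1 (2 * n) j = dsum a n.
Proof.
rewrite sum_nat_double_halves; apply: eq_bigr => j _.
by rewrite sawDn -(saw_halfD 1 j) //; ring.
Qed.

Lemma dsum_knopp2 (a : int) :
  dsum (2 * a) n + dsum a (2 * n) + dsum (a + n%:Z) (2 * n) = 3 * dsum a n.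
Proof.
have sawD_even i : saw a (2 * n) (2 * i) + saw (a + n%:Z) (2 * n) (2 * i) = 2 * saw a n i.
  by rewrite !sawMn // sawDz; ring.
have sawD_odd i :
    saw a (2 * n) (2 * i).+1 + saw (a + n%:Z) (2 * n) (2 * i).+1 = saw a n (2 * i).+1.
  rewrite [RHS]saw_double; congr (_ + _); rewrite /saw; apply: (sawtooth_eqDintr i).
  by rewrite intrD -[(2 * i)%N.+1]addn1 natrD !natrM; field.
transitivity (2 * dsum a n + \sum_(0 <= i < n)
    (saw a n (2 * i) * saw 1 (2 * n) (2 * i) + saw a n (2 * i).+1 * saw 1 (2 * n) (2 * i).+1)).
  rewrite /dsum -addrA -big_split /=.
  under [X in _ + X]eq_bigr do rewrite -mulrDl.
  rewrite sum_nat_double_parity mulr_sumr -!big_split /=; apply: eq_bigr => i _.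
  by rewrite sawD_even sawD_odd (sawMl a 2) !sawMn //; ring.
rewrite -(@sum_nat_double_parity _ (fun j => saw a n j * saw 1 (2 * n) j)).
by rewrite sum_saw_saw1_double; ring.
Qed.

End Modulus.

Lemma dsum_odd {n : nat} {a : int} : (0 < n)%N -> odd `|a|%N ->
  dsum a (2 * n) = dsum a n / 2 - 1 / 2 * \sum_(0 <= j < n) saw a (2 * n) j.
Proof.
move=> n_gt0 a_odd; have n2_gt0 : (0 < 2 * n)%N by rewrite muln_gt0.
have n_neq0 : (n%:R : rat) != 0 by rewrite pnatr_eq0 -lt0n.
have sum_shift : - \sum_(0 <= j < n) saw a (2 * n) j = \sum_(0 <= j < n) saw a (2 * n) (j + n).
  by have := sum_saw n2_gt0 a; rewrite sum_nat_double_halves big_split /=; lra.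
rewrite (dsumE n2_gt0) (dsumE n_gt0) sum_nat_double_halves -mulrN sum_shift.
rewrite mulr_suml mulr_sumr -big_split /=; apply: eq_bigr => j _.
by rewrite -(saw_halfD n_gt0 a j a_odd) natrD natrM; field.
Qed.

Lemma ratio_notint (h : int) (n j : nat) : gcdz h n = 1 -> (0 < j < n)%N ->
  (h%:~R * j%:R / n%:R : rat) \isn't a Num.int.
Proof.
move=> hn_coprime /andP[j_gt0 j_lt_n]; apply/negP => /intrP[m hjn].
have n_neq0 : (n%:R : rat) != 0 by rewrite pnatr_eq0 -lt0n (leq_ltn_trans _ j_lt_n).
have : (n%:Z %| j%:Z * h)%Z.
  apply/dvdzP; exists m; apply: (@intr_inj rat).
  by rewrite !intrM -hjn mulrC divfK.
rewrite Gauss_dvdzl; last by rewrite /coprimez gcdzC hn_coprime.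
by move=> /(dvdn_leq j_gt0); lia.
Qed.

Section Coprime.

Context {h : int} {n : nat}.
Hypothesis hn_coprime : gcdz h n = 1.

Lemma flr_reflect (j : nat) : (0 < j < n)%N -> flr h n (n - j) = h - 1 - flr h n j.
Proof.
move=> j_range; have /andP[_ j_lt_n] := j_range.
have n_neq0 : (n%:R : rat) != 0 by rewrite pnatr_eq0 -lt0n (leq_ltn_trans _ j_lt_n).
rewrite /flr natrB 1?ltnW // (_ : _ / _ = - (h%:~R * j%:R / n%:R) + h%:~R); last by field.
rewrite floorDrz ?intr_int // intrKfloor floorN_notint; first ring.
exact: ratio_notint.
Qed.

Lemma B1_sign_sum : odd `|(h + n%:Z)%R|%N ->
  2 * B1 h n = (h%:~R - 1) * \sum_(1 <= j < n) (-1) ^ (j%:Z + flr h n j).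
Proof.
move=> hn_odd.
pose F j := (-1 : rat) ^ (j%:Z + flr h n j) * (flr h n j)%:~R.
have B1E : B1 h n = \sum_(1 <= j < n) F j.
  by apply: eq_bigr => j _; rewrite /F /flr intrM.
have B1_rev : B1 h n = \sum_(1 <= j < n) F (n - j)%N.
  rewrite B1E big_nat_rev; apply: eq_big_nat => j _.
  by rewrite add1n subSS.
(* j and n - j carry the same sign, as h + n is odd, and their floors add up to h - 1. *)
rewrite mulr_natl mulr2n {1}B1E B1_rev -big_split mulr_sumr; apply: eq_big_nat => j j_range.
have /andP[_ j_lt_n] := j_range.
rewrite /F flr_reflect // !expN1zE; move: (flr h n j) => f.
have -> : odd `|((n - j)%N%:Z + (h - 1 - f))%R|%N = odd `|(j%:Z + f)%R|%N.
  by lia.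
by rewrite /= !intrB mulr1z; ring.
Qed.

Lemma sign_sum_saw : (0 < n)%N ->
  \sum_(1 <= j < n) (-1) ^ (j%:Z + flr h n j)
    = -4 * \sum_(0 <= j < n) saw (h + n%:Z) (2 * n) j.
Proof.
move=> n_gt0.
have n_neq0 : (n%:R : rat) != 0 by rewrite pnatr_eq0 -lt0n.
have an_coprime : gcdz (h + n%:Z) n = 1 by rewrite gcdzC gcdzDr gcdzC.
transitivity (\sum_(0 <= j < n)
    (2 * saw (h + n%:Z) n j - 4 * saw (h + n%:Z) (2 * n) j)); last first.
  by rewrite sumrB -!mulr_sumr sum_saw // mulr0 add0r mulNr.
rewrite (big_ltn n_gt0) !saw0 mulr0 subrr add0r; apply: eq_big_nat => j j_range.
have -> : j%:Z + flr h n j = flr (h + n%:Z) n j.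
  rewrite /flr (_ : (h + n%:Z)%:~R * _ / _ = h%:~R * j%:R / n%:R + j%:~R).
    by rewrite floorDrz ?intr_int // intrKfloor addrC.
  by rewrite intrD; field.
rewrite /flr expN1_floor ?ratio_notint // /saw; congr (_ - 4 * sawtooth _).
by rewrite natrM; field.
Qed.

End Coprime.

Theorem theorem18 (h k : int) (hk : 0 < k) (hcop : gcdz h k = 1)
  (hodd : odd `|(h + k)%R|%N) :
  B1 h k = (1 - h%:~R) *
    (4 * dedekind_sum h (2 * k) + 4 * dedekind_sum (2 * h) k
     - 10 * dedekind_sum h k).
Proof.
case: k hk hcop hodd => [n|//]; rewrite ltz_nat => n_gt0 hn_coprime hn_odd.
rewrite -[2 * n%:Z]/((2 * n)%N : int) !dedekind_sumE.
have := B1_sign_sum hn_coprime hn_odd; rewrite sign_sum_saw //.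
have := dsum_knopp2 n_gt0 h.
have := dsum_odd n_gt0 hn_odd; rewrite dsumDz //.
set P := \sum_(0 <= j < n) _ => dsum_odd_eq knopp B1_eq.
have -> : 4 * dsum h (2 * n) + 4 * dsum (2 * h) n - 10 * dsum h n = 2 * P by lra.
lra.
Qed.
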